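(* Let $k\geq 2$ and $n\geq k+1$ be integers. In the quasi-shuffle algebra $(\mathcal{H},\ast)$, $$ \begin{aligned} \sum_{\substack{ r, s_i\geq 1,\ s_1\geq 2 \\ r+s_1+\cdots +s_{k-1}=n}} z_{r}\ast z_{s_1,\dots, s_{k-1}} = &\sum_{\substack{ t_i\geq 1,\ t_1=1,\ t_2\geq 2 \\ t_1+\cdots+t_{k}=n}} z_{t_1,t_2,\dots, t_{k}} +(k-1) \sum_{\substack{t_i\geq 1,\ t_1\geq 2,\ t_2=1 \\ t_1+\cdots+t_{k}=n }} z_{t_1,\dots,t_{k}}\\ &+k \sum_{\substack{t_i\geq 1,\ t_1\geq 2,\ t_2\geq 2 \\ t_1+\cdots+t_{k}=n}} z_{t_1,\dots, t_{k}} + (n-k) \sum_{\substack{u_i\geq 1,\ u_1\geq 2 \\ u_1+\cdots+u_{k-1}=n }} z_{u_1,\dots, u_{k-1}}. \end{aligned} $$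
   Context: Let $\mathcal{H}$ be the free $\mathbb{Z}$-module on the free monoid generated by letters $z_s$ ($s\geq 1$ an integer); write $z_{s_1,\dots,s_k}:=z_{s_1}z_{s_2}\cdots z_{s_k}$ for a word and $1$ for the empty word. The quasi-shuffle (stuffle) product $\ast$ is the $\mathbb{Z}$-bilinear product on $\mathcal{H}$ defined on words recursively by $1\ast u=u\ast 1=u$ and $(z_{r}u)\ast(z_{s}v)=z_{r}\,(u\ast (z_{s}v))+z_{s}\,((z_{r}u)\ast v)+z_{r+s}\,(u\ast v)$ for words $u,v$ and integers $r,s\geq 1$ (juxtaposition denotes concatenation, extended linearly). *)

From mathcomp Require Import all_boot all_order all_algebra.
Set Implicit Arguments. Unset Strict Implicit. Unset Printing Implicit Defensive.
Import GRing.Theory.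
Local Open Scope ring_scope.

(* Words over the letters z_s are encoded as sequences of naturals s
   (z_{s_1..s_k} = [:: s_1; ...; s_k]).  An element of the free Z-module
   H is represented by its coefficient function (word -> int); all
   elements considered here are finitely supported. *)
Definition H := seq nat -> int.

Definition addH (f g : H) : H := fun w => f w + g w.
Definition scaleH (c : int) (f : H) : H := fun w => c * f w.

Definition zw (w : seq nat) : H := fun u => (u == w)%:Z.

Definition lcons (r : nat) (f : H) : H :=
  fun u => match u with
           | a :: u' => if a == r then f u' else 0
           | [::] => 0
           end.

Fixpoint stuffle (u : seq nat) : seq nat -> H :=
  match u with
  | [::] => zw
  | r :: u' =>
      fix st (v : seq nat) : H :=
        match v with
        | [::] => zw u
        | s :: v' =>
            addH (addH (lcons r (stuffle u' v)) (lcons s (st v')))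
                 (lcons (r + s) (stuffle u' v'))
        end
  end.

Definition comp_sum (m n : nat) (P : seq nat -> bool) : H :=
  fun w => \sum_(t : m.-tuple 'I_n.+1 |
                  [&& all (fun x => 0 < x)%N (map val t),
                      sumn (map val t) == n & P (map val t)])
             zw (map val t) w.

From mathcomp Require Import all_boot all_order all_algebra.
From mathcomp Require Import zify.
Set Implicit Arguments. Unset Strict Implicit.
Import GRing.Theory.

(* The quasi-shuffle product of a letter z_r with a word s is the sum of the
   words obtained from s either by inserting the letter r at some position or
   by adding r to one of its letters.  So the coefficient of a word w in the
   left-hand side counts the pairs (r, position j of w) through which w arises.
   If w is a composition of n of length k, only insertions occur: deleting w_j
   must leave a word with first letter >= 2, which happens for j = 1 iff
   w_2 >= 2 and for each of the k - 1 other positions iff w_1 >= 2.  If w has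
   length k - 1 and w_1 >= 2, only merges occur: subtracting r from w_j must
   leave a positive letter, and a letter >= 2 when j = 1, so there are
   w_j - 1 choices of r, one fewer for j = 1; in total n - (k - 1) - 1 = n - k. *)

Definition rem_nth (j : nat) (w : seq nat) : seq nat := take j w ++ drop j.+1 w.

Section Positions.
Variables (j : nat) (w : seq nat).
Hypothesis lt_j_w : j < size w.

Lemma perm_set_nth x : perm_eq (set_nth 0 w j x) (x :: rem_nth j w).
Proof. by rewrite set_nthE lt_j_w -cat1s perm_catCA. Qed.

Lemma set_nth_nth : set_nth 0 w j (nth 0 w j) = w.
Proof. by rewrite set_nthE lt_j_w -drop_nth ?cat_take_drop. Qed.

Lemma perm_rem_nth : perm_eq w (nth 0 w j :: rem_nth j w).
Proof. by rewrite -{1}set_nth_nth perm_set_nth. Qed.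

End Positions.

Lemma nth0_rem_nth j w : nth 0 (rem_nth j w) 0 = nth 0 w (j == 0).
Proof. by case: j w => [|j] [|a w]; rewrite /rem_nth //= drop0. Qed.

Lemma all_leq_sumn w : all (fun x => x <= sumn w) w.
Proof.
elim: w => //= a w IH; rewrite leq_addr.
by apply: sub_all IH => x /leq_trans; apply; rewrite leq_addl.
Qed.

Lemma sum_tuple_eq m n (Q : pred (seq nat)) (b : bool) v :
  (\sum_(t : m.-tuple 'I_n.+1 | Q (map val t)) Posz ((map val t == v) && b))%R
  = Posz [&& size v == m, all (fun x => x <= n) v, Q v & b].
Proof.
case: (boolP ((size v == m) && all (fun x => x <= n) v)) => [/andP[sv vn]|]; last first.
  move=> not_tuple; rewrite big1 => [|t _].
    by case: (size v == m) (all _ v) not_tuple => [] [].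
  case: eqP => // tv; case/negP: not_tuple; rewrite -tv size_map size_tuple eqxx /=.
  by apply/allP => _ /mapP[i _ ->]; rewrite -ltnS.
have sz : size (map (@inord n) v) == m by rewrite size_map.
have t0v : map val (Tuple sz) = v.
  by rewrite -map_comp map_id_in // => x /(allP vn) /inordK.
rewrite sv vn big_mkcond (bigD1 (Tuple sz)) // big1 => [|t nt].
  by rewrite t0v eqxx /= addr0; case: (Q v).
by rewrite -t0v (inj_eq (inj_map val_inj)) val_eqE (negbTE nt); case: ifP.
Qed.

Lemma sum_ord_pick (V : nmodType) n a (F : 'I_n.+1 -> V) :
  (forall r : 'I_n.+1, val r != a -> F r = 0%R) ->
  (\sum_(r < n.+1) F r)%R = if a <= n then F (inord a) else 0%R.
Proof.
move=> F0; case: leqP => [le_an|lt_na].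
  rewrite (bigD1 (inord a)) //= big1 ?addr0 // => r; apply: contraNeq => nFr.
  by apply/eqP/val_inj; rewrite /= inordK //; apply: contraNeq nFr => /F0->.
by rewrite big1 // => r _; apply: F0; rewrite neq_ltn (leq_trans (ltn_ord r)).
Qed.

Lemma sum_ord_range n a : a <= n ->
  (\sum_(r < n.+1) Posz ((0 < r) && (r <= a))%N)%R = Posz a.
Proof.
elim: n a => [|n IHn] a le_an; first by rewrite big_ord1; case: a le_an => [|[]].
rewrite big_ord_recr /=; case: (ltngtP a n.+1) le_an => // [lt_an|->] _.
  by rewrite addr0 IHn.
rewrite (eq_bigr (fun i : 'I_n.+1 => Posz ((0 < i) && (i <= n)))) => [|i _].
  by rewrite IHn // -PoszD addn1.
by rewrite (ltnW (ltn_ord i)) -[i <= n]ltnS ltn_ord.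
Qed.

Definition is_comp (m n : nat) (w : seq nat) : bool :=
  [&& size w == m, all (fun x => 0 < x) w & sumn w == n].

Lemma is_comp_size m n w : is_comp m n w -> size w = m.
Proof. by case/and3P => /eqP. Qed.

Lemma comp_sumE m n P w : comp_sum m n P w = Posz (is_comp m n w && P w).
Proof.
rewrite /comp_sum.
rewrite (eq_bigr (fun t : m.-tuple 'I_n.+1 => Posz ((map val t == w) && true))) => [|t _].
  rewrite (sum_tuple_eq _ _ (fun u => [&& all (fun x => 0 < x) u, sumn u == n & P u])).
  rewrite /is_comp andbT; case: (sumn w =P n) => [<-|_]; last by rewrite !andbF.
  by rewrite all_leq_sumn; case: (size w == m); case: all.
by rewrite /zw andbT eq_sym.
Qed.

Lemma stuffle1E r s w :
  stuffle [:: r] s w =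
  (\sum_(j < size w)
     (Posz ((s == rem_nth j w) && (nth 0 w j == r))%N
      + Posz ((s == set_nth 0 w j (nth 0 w j - r)) && (r <= nth 0 w j))%N))%R.
Proof.
elim: s w => [|s0 s IHs] [|a w]; rewrite [size _]/= ?big_ord0 //.
- rewrite big_ord_recl big1 => [|j _] /=; last by rewrite addr0.
  by rewrite /zw /rem_nth /= drop0 eqseq_cons andbC eq_sym !addr0.
- rewrite [stuffle _ _]/= -/(stuffle [:: r] s) /addH /lcons /zw IHs big_ord_recl.
  rewrite /rem_nth /= drop0.
  have merge_eq : (s0 :: s == (a - r) :: w) && (r <= a) = (a == r + s0) && (w == s).
    rewrite eqseq_cons andbAC [s == w]eq_sym; congr (_ && _).
    apply/andP/eqP => [[/eqP -> ra]|->]; first by rewrite subnKC.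
    by rewrite addKn leq_addr.
  rewrite merge_eq [s0 :: s == w]eq_sym.
  under [in RHS]eq_bigr do rewrite add0n /bump leq0n add1n !eqseq_cons [s0 == a]eq_sym -!andbA.
  case: (a == s0); last by rewrite big1 //; case: (a == r); case: (a == _); lia.
  under [in RHS]eq_bigr do rewrite !andTb.
  by case: (a == r); case: (a == _); lia.
Qed.

Section LeftHandSide.
Variables (m n : nat).

Let lhs_index (r : nat) (s : seq nat) :=
  [&& 0 < r, all (fun x => 0 < x) s, 2 <= nth 0 s 0 & r + sumn s == n].

Lemma sum_insert_at w j : j < size w ->
  (\sum_(r < n.+1) \sum_(s : m.-tuple 'I_n.+1 | lhs_index r (map val s))
     Posz ((map val s == rem_nth j w) && (nth 0 w j == r))%N)%R
  = Posz (is_comp m.+1 n w && (2 <= nth 0 w (j == 0))).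
Proof.
move=> lt_jw; under eq_bigr => r _ do rewrite (sum_tuple_eq _ _ (lhs_index r)).
rewrite (sum_ord_pick (a := nth 0 w j)) => [|r]; last first.
  by rewrite eq_sym => /negbTE ->; rewrite !andbF.
have pw := perm_rem_nth lt_jw.
rewrite /is_comp (perm_size pw) (perm_all _ pw) (perm_sumn pw) /= /lhs_index nth0_rem_nth.
case: (leqP (nth 0 w j) n) => [le_wj_n|lt_n_wj]; last first.
  by case: eqP => //; lia.
rewrite inordK // eqxx andbT eqSS.
case: (_ + _ =P n) => [sum_n|]; last by rewrite !andbF.
have -> : all (fun x => x <= n) (rem_nth j w).
  by apply: sub_all (all_leq_sumn _) => x /leq_trans; apply; lia.
by rewrite !andbT andTb -!andbA.
Qed.

Lemma sum_merge_at w j : j < size w ->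
  (\sum_(r < n.+1) \sum_(s : m.-tuple 'I_n.+1 | lhs_index r (map val s))
     Posz ((map val s == set_nth 0 w j (nth 0 w j - r)) && (r <= nth 0 w j))%N)%R
  = (Posz (is_comp m n w && (2 <= nth 0 w 0))%N
     * (Posz (nth 0 w j)%N - 1 - Posz (j == 0)%N))%R.
Proof.
move=> lt_jw; under eq_bigr => r _ do rewrite (sum_tuple_eq _ _ (lhs_index r)).
have pw := perm_rem_nth lt_jw.
have pv r := perm_set_nth lt_jw (nth 0 w j - r).
have head r :
    nth 0 (set_nth 0 w j (nth 0 w j - r)) 0 = if j == 0 then nth 0 w j - r else nth 0 w 0.
  by rewrite nth_set_nth /= eq_sym.
rewrite /is_comp (perm_size pw) (perm_all _ pw) (perm_sumn pw) /=.
under eq_bigr => r _ do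
  rewrite /lhs_index (perm_size (pv r)) !(perm_all _ (pv r)) (perm_sumn (pv r)) head /=.
have x0E : j = 0 -> nth 0 w 0 = nth 0 w j by move->.
move: x0E; set x := nth 0 w j; set x0 := nth 0 w 0; set rest := rem_nth j w => x0E.
case: (x + sumn rest =P n) => [sum_n|sum_n]; last first.
  rewrite !andbF mul0r big1 // => r _.
  case: (leqP r x) => [le_rx|]; rewrite ?andbF //.
  have /negbTE -> : r + (x - r + sumn rest) != n by lia.
  by rewrite !(andbF, andFb).
have -> : all (fun y => y <= n) rest.
  by apply: sub_all (all_leq_sumn _) => y /leq_trans; apply; lia.
set G := (_ && (1 < x0)).
rewrite (eq_bigr (fun r : 'I_n.+1 => Posz (G && ((0 < r) && (r <= x - 1 - (j == 0))))))
  => [|r _].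
  case HG: G; last by rewrite mul0r big1.
  move: HG => /andP[/and3P[_ /andP[x_gt0 _] _] x0_gt1].
  rewrite mul1r sum_ord_range; last lia.
  by case: eqP x0E => [-> /(_ erefl) x0x|_ _]; lia.
rewrite /G; case: ((size rest).+1 == m); case: all; rewrite ?andbF //=.
by case: eqP x0E => [-> /(_ erefl) ->|_ _]; lia.
Qed.

Lemma stuffle_sumE w :
  (\sum_(r < n.+1) \sum_(s : m.-tuple 'I_n.+1 | lhs_index r (map val s))
     stuffle [:: val r] (map val s) w)%R
  = (\sum_(j < size w)
       (Posz (is_comp m.+1 n w && (2 <= nth 0 w (j == 0 :> nat)))%N
        + Posz (is_comp m n w && (2 <= nth 0 w 0))%N
          * (Posz (nth 0 w j)%N - 1 - Posz (j == 0 :> nat)%N)))%R.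
Proof.
under eq_bigr => r _ do under eq_bigr => s _ do rewrite stuffle1E.
under eq_bigr => r _ do rewrite exchange_big.
rewrite exchange_big; apply: eq_bigr => j _.
rewrite -sum_insert_at // -sum_merge_at // -big_split; apply: eq_bigr => r _.
by rewrite -big_split.
Qed.

End LeftHandSide.

Lemma sum_nth_nat w : (\sum_(j < size w) Posz (nth 0 w j)%N)%R = Posz (sumn w).
Proof. by elim: w => [|a w IHw]; rewrite ?big_ord0 // big_ord_recl IHw PoszD. Qed.

Lemma sum_head_ge2 w : 0 < size w ->
  (\sum_(j < size w) Posz (2 <= nth 0 w (j == 0 :> nat))%N)%R
  = (Posz (2 <= nth 0 w 1)%N + Posz (size w).-1 * Posz (2 <= nth 0 w 0)%N)%R.
Proof.
case: w => [|a w] //= _; rewrite big_ord_recl /=.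
under eq_bigr do rewrite /bump /=.
by rewrite sumr_const card_ord -mulr_natl natz.
Qed.

Lemma sum_merge_weights w : 0 < size w ->
  (\sum_(j < size w) (Posz (nth 0 w j)%N - 1 - Posz (j == 0 :> nat)%N))%R
  = (Posz (sumn w) - Posz (size w) - 1)%R.
Proof.
move=> w_gt0; rewrite !sumrB sum_nth_nat sumr_const card_ord natz.
by case: w w_gt0 => [|a w] // _; rewrite big_ord_recl big1 ?addr0.
Qed.

Local Open Scope ring_scope.

Theorem theorem2p4 (k n : nat) (hk : (2 <= k)%N) (hn : (k.+1 <= n)%N) :
  forall w : seq nat,
    \sum_(r < n.+1)
      \sum_(s : (k.-1).-tuple 'I_n.+1 |
             [&& (0 < r)%N, all (fun x => 0 < x)%N (map val s),
                 (2 <= nth 0 (map val s) 0)%N & (r + sumn (map val s) == n)%N])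
        stuffle [:: val r] (map val s) w
    =
    addH (addH (addH
      (comp_sum k n (fun t => (nth 0 t 0 == 1)%N && (2 <= nth 0 t 1)%N))
      (scaleH (k - 1)%N%:Z
         (comp_sum k n (fun t => (2 <= nth 0 t 0)%N && (nth 0 t 1 == 1)%N))))
      (scaleH k%:Z
         (comp_sum k n (fun t => (2 <= nth 0 t 0)%N && (2 <= nth 0 t 1)%N))))
      (scaleH (n - k)%N%:Z
         (comp_sum (k.-1) n (fun u => (2 <= nth 0 u 0)%N))) w.
Proof.
move=> w; rewrite /addH /scaleH !comp_sumE stuffle_sumE (prednK (ltnW hk)).
case Ck: (is_comp k n w).
  have -> : is_comp k.-1 n w = false.
    by apply/negP => /is_comp_size; rewrite (is_comp_size Ck); lia.
  under eq_bigr do rewrite mul0r addr0.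
  have [sz pos] : size w = k /\ all (fun x => 0 < x)%N w by case/and3P: Ck => /eqP.
  rewrite sum_head_ge2 ?sz ?(ltnW hk) //.
  have := allP pos (nth 0 w 0) (mem_nth _ _); have := allP pos (nth 0 w 1) (mem_nth _ _).
  rewrite sz; move=> /(_ hk) w1_gt0 /(_ (ltnW hk)) w0_gt0.
  move: w0_gt0 w1_gt0; case: (nth 0 w 0) => [|[|?]] //;
    by case: (nth 0 w 1) => [|[|?]] //= _ _; lia.
case Ck1: (is_comp k.-1 n w); last by rewrite big1 => [|j _] /=; [lia | rewrite mul0r].
case/and3P: Ck1 => /eqP sz _ /eqP sum_n.
rewrite (eq_bigr (fun j : 'I_(size w) =>
  Posz (2 <= nth 0 w 0)%N * (Posz (nth 0 w j)%N - 1 - Posz (j == 0 :> nat)))) => [|j _].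
  by rewrite -mulr_sumr sum_merge_weights sz ?sum_n; lia.
by rewrite /= add0r.
Qed.
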